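(* Let $\alpha$ be an action of a discrete group $G$ on a non-compact locally compact Hausdorff space $X$ with more than two points, such that for every compact $K\subseteq X$ and every nonempty open $U\subseteq X$ there exists $g\in G$ with $\alpha_g(K)\subseteq U$. Then the induced action $\sigma_g(f)=f\circ\alpha_g^{-1}$ on $C_0(X)$ is $G$-separating.
   Context: $\sigma$ is $G$-separating if for all $a,b\in C_0(X)_+$, $c\in C_0(X)$, $\varepsilon>0$ there exist $s,t\in C_0(X)$, $g,h\in G$ with $\|s^*as-\sigma_g(a)\|<\varepsilon$, $\|t^*bt-\sigma_h(b)\|<\varepsilon$, $\|s^*ct\|<\varepsilon$. *)

From Stdlib Require Import Reals List.
Open Scope R_scope.

Definition C := (R * R)%type.
Definition Cre (z : C) : R := fst z.
Definition Cim (z : C) : R := snd z.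
Definition Cmul (z w : C) : C :=
  (Cre z * Cre w - Cim z * Cim w, Cre z * Cim w + Cim z * Cre w).
Definition Csub (z w : C) : C := (Cre z - Cre w, Cim z - Cim w).
Definition Cconj (z : C) : C := (Cre z, - Cim z).
Definition Cmod (z : C) : R := sqrt (Cre z * Cre z + Cim z * Cim z).

Definition is_topology {X : Type} (opn : (X -> Prop) -> Prop) : Prop :=
  opn (fun _ => True) /\
  (forall (I : Type) (F : I -> X -> Prop),
      (forall i, opn (F i)) -> opn (fun x => exists i, F i x)) /\
  (forall U V, opn U -> opn V -> opn (fun x => U x /\ V x)).

Definition is_compact {X : Type} (opn : (X -> Prop) -> Prop) (K : X -> Prop) : Prop :=
  forall (I : Type) (F : I -> X -> Prop),
    (forall i, opn (F i)) ->
    (forall x, K x -> exists i, F i x) ->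
    exists l : list I, forall x, K x -> exists i, In i l /\ F i x.

Definition hausdorff {X : Type} (opn : (X -> Prop) -> Prop) : Prop :=
  forall x y : X, x <> y ->
    exists U V, opn U /\ opn V /\ U x /\ V y /\ (forall z, ~ (U z /\ V z)).

Definition locally_compact {X : Type} (opn : (X -> Prop) -> Prop) : Prop :=
  forall x : X, exists U K, opn U /\ U x /\ is_compact opn K /\ (forall y, U y -> K y).

Definition continuous {X Y : Type} (opnX : (X -> Prop) -> Prop)
  (opnY : (Y -> Prop) -> Prop) (f : X -> Y) : Prop :=
  forall V, opnY V -> opnX (fun x => V (f x)).

Definition more_than_two_points (X : Type) : Prop :=
  exists x y z : X, x <> y /\ y <> z /\ x <> z.

Definition is_group {G : Type} (mul : G -> G -> G) (e : G) (inv : G -> G) : Prop :=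
  (forall a b c, mul a (mul b c) = mul (mul a b) c) /\
  (forall a, mul e a = a) /\ (forall a, mul a e = a) /\
  (forall a, mul (inv a) a = e) /\ (forall a, mul a (inv a) = e).

(* action of the (discrete) group G on X by homeomorphisms
   (continuity of each alpha_g; continuity of the inverse alpha_{g^-1} follows) *)
Definition is_continuous_action {G X : Type} (mul : G -> G -> G) (e : G)
  (opn : (X -> Prop) -> Prop) (alpha : G -> X -> X) : Prop :=
  (forall x, alpha e x = x) /\
  (forall g h x, alpha (mul g h) x = alpha g (alpha h x)) /\
  (forall g, continuous opn opn (alpha g)).

Definition continuous_C {X : Type} (opn : (X -> Prop) -> Prop) (f : X -> C) : Prop :=
  forall x (eps : R), 0 < eps ->
    exists U, opn U /\ U x /\ forall y, U y -> Cmod (Csub (f y) (f x)) < eps.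

Definition vanishes_at_infinity {X : Type} (opn : (X -> Prop) -> Prop) (f : X -> C) : Prop :=
  forall eps : R, 0 < eps ->
    exists K, is_compact opn K /\ forall x, ~ K x -> Cmod (f x) < eps.

Definition in_C0 {X : Type} (opn : (X -> Prop) -> Prop) (f : X -> C) : Prop :=
  continuous_C opn f /\ vanishes_at_infinity opn f.

Definition in_C0_pos {X : Type} (opn : (X -> Prop) -> Prop) (f : X -> C) : Prop :=
  in_C0 opn f /\ forall x, Cim (f x) = 0 /\ 0 <= Cre (f x).

Definition supnorm_lt {X : Type} (f : X -> C) (eps : R) : Prop :=
  exists M : R, M < eps /\ forall x, Cmod (f x) <= M.

Definition fmul {X : Type} (f g : X -> C) : X -> C := fun x => Cmul (f x) (g x).
Definition fsub {X : Type} (f g : X -> C) : X -> C := fun x => Csub (f x) (g x).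
Definition fstar {X : Type} (f : X -> C) : X -> C := fun x => Cconj (f x).

Definition sigma {G X : Type} (inv : G -> G) (alpha : G -> X -> X) (g : G) (f : X -> C)
  : X -> C := fun x => f (alpha (inv g) x).

Definition G_separating {G X : Type} (opn : (X -> Prop) -> Prop) (inv : G -> G)
  (alpha : G -> X -> X) : Prop :=
  forall (a b c : X -> C) (eps : R),
    in_C0_pos opn a -> in_C0_pos opn b -> in_C0 opn c -> 0 < eps ->
    exists (s t : X -> C) (g h : G),
      in_C0 opn s /\ in_C0 opn t /\
      supnorm_lt (fsub (fmul (fmul (fstar s) a) s) (sigma inv alpha g a)) eps /\
      supnorm_lt (fsub (fmul (fmul (fstar t) b) t) (sigma inv alpha h b)) eps /\
      supnorm_lt (fmul (fmul (fstar s) c) t) eps.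

From Pilot Require Import Defs.
From Stdlib Require Import Reals List Lra Classical.
Open Scope R_scope.

(* Let a, b >= 0 and c lie in C_0(X), eps > 0, and put d = eps/2.
   Choose compact sets K_a, K_b off which a, b are < d, and nonempty open sets
   O_a, O_b on which a > d, respectively b > d (any nonempty open set will do if
   the function never exceeds d).  Contracting two distinct points into an open
   set shows that nonempty open sets are not singletons, so by Hausdorffness O_a
   and O_b contain disjoint nonempty open sets P_a, P_b.  Pick g with
   alpha_g(K_a) inside P_a and let
        s = sqrt (max(0, sigma_g a - d) / max(d, a)).
   Wherever sigma_g a > d we are in alpha_g(K_a), hence in P_a where a > d, so
   s^* a s = max(0, sigma_g a - d) is within d of sigma_g a and s is supported in
   P_a.  Building t from b, h and P_b alike, s^* c t = 0 by disjointness. *)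

Definition creal (u : R) : Defs.C := (u, 0).

Lemma Cmod_creal u : Cmod (creal u) = Rabs u.
Proof.
  unfold Cmod, creal, Cre, Cim; simpl.
  rewrite Rmult_0_l, Rplus_0_r; apply sqrt_Rsqr_abs.
Qed.

Lemma Cmod_Re_le z : Rabs (Cre z) <= Cmod z.
Proof.
  unfold Cmod; rewrite <- sqrt_Rsqr_abs; apply sqrt_le_1_alt.
  pose proof (Rle_0_sqr (Cim z)); unfold Rsqr in *; lra.
Qed.

Lemma Csub_creal u v : Csub (creal u) (creal v) = creal (u - v).
Proof. unfold Csub, creal, Cre, Cim; simpl; f_equal; ring. Qed.

Lemma Cmul_creal u v : Cmul (creal u) (creal v) = creal (u * v).
Proof. unfold Cmul, creal, Cre, Cim; simpl; f_equal; ring. Qed.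

Lemma Cconj_creal u : Cconj (creal u) = creal u.
Proof. unfold Cconj, creal, Cre, Cim; simpl; f_equal; ring. Qed.

Lemma Cmod_sandwich_zero (u z w : Defs.C) :
  u = creal 0 \/ w = creal 0 -> Cmod (Cmul (Cmul (Cconj u) z) w) = 0.
Proof.
  assert (Hz : (0, 0) = creal 0) by reflexivity.
  intros [-> | ->]; unfold Cmul, Cconj, Cre, Cim, creal; simpl;
    match goal with |- Cmod (?p, ?q) = 0 =>
      replace p with 0 by ring; replace q with 0 by ring end;
    rewrite Hz, Cmod_creal, Rabs_R0; reflexivity.
Qed.

Section RealContinuity.

Context {X : Type} (opn : (X -> Prop) -> Prop).
Hypothesis Htop : is_topology opn.

Definition rcont (f : X -> R) : Prop :=
  forall x eps, 0 < eps ->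
    exists U, opn U /\ U x /\ forall y, U y -> Rabs (f y - f x) < eps.

Lemma rcont_ext (f g : X -> R) : (forall y, f y = g y) -> rcont f -> rcont g.
Proof.
  intros E H x eps He; destruct (H x eps He) as [U [HU [Ux HUy]]].
  exists U; repeat split; auto; intros y Uy; rewrite <- !E; auto.
Qed.

Lemma continuity_pt_eps (phi : R -> R) u :
  continuity_pt phi u -> forall eps, 0 < eps ->
  exists delta, 0 < delta /\
    forall v, Rabs (v - u) < delta -> Rabs (phi v - phi u) < eps.
Proof.
  intros H eps He; destruct (H eps He) as [delta [Hd Hv]].
  exists delta; split; auto; intros v Hvd.
  destruct (Req_dec v u) as [-> | Hne].
  - unfold Rminus; rewrite Rplus_opp_r, Rabs_R0; auto.
  - apply (Hv v); repeat split; auto.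
Qed.

Lemma rcont_comp (f : X -> R) (phi : R -> R) :
  (forall x, continuity_pt phi (f x)) -> rcont f -> rcont (fun y => phi (f y)).
Proof.
  intros Hc H x eps He.
  destruct (continuity_pt_eps _ _ (Hc x) eps He) as [delta [Hd Hv]].
  destruct (H x delta Hd) as [U [HU [Ux HUy]]].
  exists U; repeat split; auto.
Qed.

Lemma rcont_lipschitz (f : X -> R) (phi : R -> R) :
  (forall u v, Rabs (phi u - phi v) <= Rabs (u - v)) ->
  rcont f -> rcont (fun y => phi (f y)).
Proof.
  intros Hc H x eps He; destruct (H x eps He) as [U [HU [Ux HUy]]].
  exists U; repeat split; auto; intros y Uy.
  eapply Rle_lt_trans; [apply Hc | auto].
Qed.

Lemma rcont_precomp (f : X -> R) (h : X -> X) :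
  continuous opn opn h -> rcont f -> rcont (fun x => f (h x)).
Proof.
  intros Hh H x eps He; destruct (H (h x) eps He) as [U [HU [Ux HUy]]].
  exists (fun y => U (h y)); repeat split; auto.
Qed.

Lemma rcont_plus (f g : X -> R) :
  rcont f -> rcont g -> rcont (fun y => f y + g y).
Proof.
  destruct Htop as [_ [_ Hinter]]; intros Hf Hg x eps He.
  destruct (Hf x (eps / 2)) as [U [HU [Ux HUy]]]; [lra |].
  destruct (Hg x (eps / 2)) as [V [HV [Vx HVy]]]; [lra |].
  exists (fun z => U z /\ V z); repeat split; auto.
  intros y [Uy Vy]; specialize (HUy y Uy); specialize (HVy y Vy).
  replace (f y + g y - (f x + g x)) with ((f y - f x) + (g y - g x)) by ring.
  eapply Rle_lt_trans; [apply Rabs_triang | lra].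
Qed.

(* Products, by polarization: fg = ((f + g)^2 - (f - g)^2) / 4. *)
Lemma rcont_mult (f g : X -> R) :
  rcont f -> rcont g -> rcont (fun y => f y * g y).
Proof.
  intros Hf Hg.
  assert (Hsum : rcont (fun y => (f y + g y) * (f y + g y) / 4)).
  { apply (rcont_comp (fun y => f y + g y) (fun u => u * u / 4)).
    - intros; reg.
    - apply rcont_plus; auto. }
  assert (Hdiff : rcont (fun y => - ((f y + - g y) * (f y + - g y) / 4))).
  { apply (rcont_comp (fun y => f y + - g y) (fun u => - (u * u / 4))).
    - intros; reg.
    - apply rcont_plus; auto.
      apply (rcont_comp g (fun u => - u)); auto; intros; reg. }
  refine (rcont_ext _ _ _ (rcont_plus _ _ Hsum Hdiff)).
  intros y; field.
Qed.

Lemma rcont_Re (a : X -> Defs.C) :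
  continuous_C opn a -> rcont (fun x => Cre (a x)).
Proof.
  intros H x eps He; destruct (H x eps He) as [U [HU [Ux HUy]]].
  exists U; repeat split; auto; intros y Uy.
  eapply Rle_lt_trans; [| apply (HUy y Uy)].
  apply (Cmod_Re_le (Csub (a y) (a x))).
Qed.

Lemma continuous_C_creal (f : X -> R) :
  rcont f -> continuous_C opn (fun x => creal (f x)).
Proof.
  intros H x eps He; destruct (H x eps He) as [U [HU [Ux HUy]]].
  exists U; repeat split; auto; intros y Uy.
  rewrite Csub_creal, Cmod_creal; auto.
Qed.

Lemma superlevel_open (f : X -> R) (d : R) :
  rcont f -> (exists x : X, True) ->
  exists O, opn O /\ (exists x, O x) /\
    forall x, O x -> d < f x \/ forall y, f y <= d.
Proof.
  intros Hf [x0 _].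
  destruct (classic (exists x, d < f x)) as [[x Hx] | Hnone].
  - destruct (Hf x (f x - d)) as [U [HU [Ux HUy]]]; [lra |].
    exists U; split; [| split; [exists x; auto |]]; auto.
    intros y Uy; left; specialize (HUy y Uy); apply Rabs_def2 in HUy; lra.
  - exists (fun _ => True); split; [apply Htop | split; [exists x0; auto |]].
    intros z _; right; intros y; apply Rnot_lt_le; intro; apply Hnone; eauto.
Qed.

End RealContinuity.

Section CutOff.

Context {X : Type} (opn : (X -> Prop) -> Prop).
Hypothesis Htop : is_topology opn.

(* The real function sqrt (max(0, B - d) / max(d, A)); when A > d wherever
   B > d, its square times A is the truncation max(0, B - d) of B. *)
Definition cutoff (A B : X -> R) (d : R) (x : X) : R :=
  sqrt (Rmax 0 (B x - d) / Rmax d (A x)).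

Variables (A B : X -> R) (d : R).
Hypothesis Hd : 0 < d.

Lemma cutoff_small x : B x <= d -> cutoff A B d x = 0.
Proof.
  intros H; unfold cutoff; rewrite Rmax_left by lra.
  unfold Rdiv; rewrite Rmult_0_l; apply sqrt_0.
Qed.

Lemma cutoff_large x :
  d < B x -> d < A x -> cutoff A B d x * A x * cutoff A B d x = B x - d.
Proof.
  intros HB HA; unfold cutoff.
  rewrite Rmax_right, Rmax_right by lra.
  rewrite Rmult_comm, <- Rmult_assoc, sqrt_sqrt; [field; lra |].
  left; apply Rdiv_lt_0_compat; lra.
Qed.

Lemma cutoff_approx x :
  0 <= B x -> (d < B x -> d < A x) ->
  Rabs (cutoff A B d x * A x * cutoff A B d x - B x) <= d.
Proof.
  intros HB0 HBA; destruct (Rle_dec (B x) d) as [Hle | Hgt].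
  - rewrite cutoff_small by auto.
    rewrite Rabs_left1; lra.
  - rewrite cutoff_large by (auto; lra).
    rewrite Rabs_left1; lra.
Qed.

Lemma Rmax_lipschitz c u v : Rabs (Rmax c u - Rmax c v) <= Rabs (u - v).
Proof.
  unfold Rmax; destruct (Rle_dec c u), (Rle_dec c v);
    unfold Rabs; repeat destruct Rcase_abs; lra.
Qed.

Lemma rcont_cutoff : rcont opn A -> rcont opn B -> rcont opn (cutoff A B d).
Proof.
  intros HA HB.
  assert (Hden_pos : forall x, 0 < Rmax d (A x))
    by (intros x; pose proof (Rmax_l d (A x)); lra).
  assert (Hnum : rcont opn (fun x => Rmax 0 (B x - d))).
  { apply (rcont_lipschitz opn (fun x => B x - d) (Rmax 0)); [apply Rmax_lipschitz |].
    apply (rcont_comp opn B (fun u => u - d)); auto; intros; reg. }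
  assert (Hinv_den : rcont opn (fun x => / Rmax d (A x))).
  { apply (rcont_comp opn (fun x => Rmax d (A x)) (fun u => / u)).
    - intros x; reg; pose proof (Hden_pos x); lra.
    - apply (rcont_lipschitz opn A (Rmax d)); auto; apply Rmax_lipschitz. }
  apply (rcont_comp opn _ sqrt).
  - intros x; apply continuity_pt_sqrt.
    apply Rmult_le_pos; [apply Rmax_l |].
    left; apply Rinv_0_lt_compat, Hden_pos.
  - apply (rcont_mult opn Htop _ _ Hnum Hinv_den).
Qed.

End CutOff.

Lemma C0_pos_real {X : Type} (opn : (X -> Prop) -> Prop) (a : X -> Defs.C) x :
  in_C0_pos opn a -> a x = creal (Cre (a x)) /\ 0 <= Cre (a x).
Proof.
  intros [_ Hpos]; destruct (Hpos x) as [Him Hre]; split; auto.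
  destruct (a x) as [p q]; unfold Cim, creal in *; simpl in *; subst; reflexivity.
Qed.

Lemma two_point_compact {X : Type} (opn : (X -> Prop) -> Prop) (x y : X) :
  is_compact opn (fun z => z = x \/ z = y).
Proof.
  intros I F _ Hcov.
  destruct (Hcov x (or_introl eq_refl)) as [i Hi].
  destruct (Hcov y (or_intror eq_refl)) as [j Hj].
  exists (i :: j :: nil); intros z [-> | ->]; [exists i | exists j]; simpl; auto.
Qed.

Section Action.

Context {G X : Type} (mul : G -> G -> G) (e : G) (inv : G -> G)
  (opn : (X -> Prop) -> Prop) (alpha : G -> X -> X).
Hypothesis Hgrp : is_group mul e inv.
Hypothesis Hact : is_continuous_action mul e opn alpha.

Lemma act_inv_r g x : alpha g (alpha (inv g) x) = x.
Proof.
  destruct Hgrp as [_ [_ [_ [_ Hr]]]]; destruct Hact as [He [Hm _]].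
  rewrite <- Hm, Hr, He; reflexivity.
Qed.

Lemma act_inv_l g x : alpha (inv g) (alpha g x) = x.
Proof.
  destruct Hgrp as [_ [_ [_ [Hl _]]]]; destruct Hact as [He [Hm _]].
  rewrite <- Hm, Hl, He; reflexivity.
Qed.

Lemma act_continuous g : continuous opn opn (alpha g).
Proof. apply Hact. Qed.

Lemma act_injective g x y : alpha g x = alpha g y -> x = y.
Proof. intros E; rewrite <- (act_inv_l g x), E; apply act_inv_l. Qed.

Lemma compact_translate (K : X -> Prop) g :
  is_compact opn K -> is_compact opn (fun x => K (alpha (inv g) x)).
Proof.
  intros HK I F HF Hcov.
  destruct (HK I (fun i y => F i (alpha g y))) as [l Hl].
  - intros i; apply act_continuous, HF.
  - intros y Ky; apply Hcov; rewrite act_inv_l; auto.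
  - exists l; intros x Kx; destruct (Hl _ Kx) as [i [Hi Fi]].
    exists i; rewrite act_inv_r in Fi; auto.
Qed.

Hypothesis Htop : is_topology opn.
Hypothesis Hhaus : hausdorff opn.
Hypothesis H3 : more_than_two_points X.
Hypothesis Hcontr : forall K U : X -> Prop,
  is_compact opn K -> opn U -> (exists x, U x) ->
  exists g : G, forall x, K x -> U (alpha g x).

(* Moving two distinct points into a nonempty open set shows it is not a singleton. *)
Lemma open_two_points O :
  opn O -> (exists x, O x) -> exists x y, x <> y /\ O x /\ O y.
Proof.
  intros HO Hne; destruct H3 as [x [y [z [Hxy _]]]].
  destruct (Hcontr _ O (two_point_compact opn x y) HO Hne) as [g Hg].
  exists (alpha g x), (alpha g y); repeat split; auto.
  intros E; apply Hxy, (act_injective g), E.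
Qed.

Lemma disjoint_open_subsets O1 O2 :
  opn O1 -> (exists x, O1 x) -> opn O2 -> (exists x, O2 x) ->
  exists P1 P2, opn P1 /\ opn P2 /\ (exists x, P1 x) /\ (exists x, P2 x) /\
    (forall x, P1 x -> O1 x) /\ (forall x, P2 x -> O2 x) /\
    (forall x, ~ (P1 x /\ P2 x)).
Proof.
  destruct Htop as [_ [_ Hinter]].
  intros HO1 Hne1 HO2 [b Hb].
  destruct (open_two_points O1 HO1 Hne1) as [x [y [Hxy [Ox Oy]]]].
  assert (Ha : exists a, O1 a /\ a <> b).
  { destruct (classic (x = b)) as [-> | Hxb]; [exists y | exists x]; auto. }
  destruct Ha as [a [Oa Hab]].
  destruct (Hhaus a b Hab) as [U [V [HU [HV [Ua [Vb Hdisj]]]]]].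
  exists (fun z => O1 z /\ U z), (fun z => O2 z /\ V z).
  split; [auto |]; split; [auto |].
  split; [exists a; auto |]; split; [exists b; auto |].
  split; [intros z []; auto |]; split; [intros z []; auto |].
  intros z [[_ Uz] [_ Vz]]; apply (Hdisj z); auto.
Qed.

End Action.

Lemma supnorm_lt_of_bound {X : Type} (f : X -> Defs.C) (M eps : R) :
  M < eps -> (forall x, Cmod (f x) <= M) -> supnorm_lt f eps.
Proof. intros; exists M; auto. Qed.

Section TranslatedCutoff.

Context {G X : Type} (mul : G -> G -> G) (e : G) (inv : G -> G)
  (opn : (X -> Prop) -> Prop) (alpha : G -> X -> X).
Hypothesis Hgrp : is_group mul e inv.
Hypothesis Hact : is_continuous_action mul e opn alpha.
Hypothesis Htop : is_topology opn.

Variables (a : X -> Defs.C) (d : R) (K O : X -> Prop) (g : G).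
Hypothesis Ha : in_C0_pos opn a.
Hypothesis Hd : 0 < d.
Hypothesis HK : is_compact opn K.
Hypothesis HKa : forall x, ~ K x -> Cmod (a x) < d.
Hypothesis HO : forall x, O x -> d < Cre (a x) \/ forall y, Cre (a y) <= d.
Hypothesis Hg : forall x, K x -> O (alpha g x).

Definition translated_cutoff (x : X) : Defs.C :=
  creal (cutoff (fun y => Cre (a y)) (fun y => Cre (Defs.sigma inv alpha g a y)) d x).

Lemma translate_large_compact x :
  d < Cre (Defs.sigma inv alpha g a x) -> K (alpha (inv g) x).
Proof.
  unfold Defs.sigma; intros Hlarge; apply NNPP; intros Hout.
  specialize (HKa _ Hout).
  pose proof (Cmod_Re_le (a (alpha (inv g) x))).
  pose proof (Rle_abs (Cre (a (alpha (inv g) x)))); lra.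
Qed.

Lemma translate_large x :
  d < Cre (Defs.sigma inv alpha g a x) -> d < Cre (a x) /\ O x.
Proof.
  intros Hlarge.
  assert (HOx : O x).
  { rewrite <- (act_inv_r mul e inv opn alpha Hgrp Hact g x).
    apply Hg, translate_large_compact, Hlarge. }
  split; auto.
  destruct (HO x HOx) as [Hx | Hsmall]; auto.
  specialize (Hsmall (alpha (inv g) x)); unfold Defs.sigma in Hlarge; lra.
Qed.

Lemma translated_cutoff_C0 : in_C0 opn translated_cutoff.
Proof.
  destruct Ha as [[Hcont _] _]; split.
  - apply continuous_C_creal, rcont_cutoff; auto.
    + apply rcont_Re; auto.
    + apply (rcont_precomp opn (fun y => Cre (a y))).
      * apply (act_continuous mul e opn alpha Hact).
      * apply rcont_Re; auto.
  - intros eps Heps; exists (fun x => K (alpha (inv g) x)); split.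
    + apply (compact_translate mul e inv opn alpha Hgrp Hact); auto.
    + intros x Hout; unfold translated_cutoff.
      rewrite cutoff_small, Cmod_creal, Rabs_R0; auto.
      apply Rnot_lt_le; intros Hlarge.
      apply Hout, translate_large_compact, Hlarge.
Qed.

(* s^* a s - sigma_g a is real and equals max(0, sigma_g a - d) - sigma_g a. *)
Lemma translated_cutoff_approx x :
  Cmod (fsub (fmul (fmul (fstar translated_cutoff) a) translated_cutoff)
             (Defs.sigma inv alpha g a) x) <= d.
Proof.
  destruct (C0_pos_real opn a x Ha) as [Hax _].
  destruct (C0_pos_real opn a (alpha (inv g) x) Ha) as [Hagx Hpos].
  unfold fsub, fmul, fstar, translated_cutoff, Defs.sigma in *.
  rewrite Hax, Hagx, Cconj_creal, !Cmul_creal, Csub_creal, Cmod_creal.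
  apply (cutoff_approx (fun y => Cre (a y)) (fun y => Cre (a (alpha (inv g) y))));
    auto.
  intros Hlarge; apply (translate_large x Hlarge).
Qed.

Lemma translated_cutoff_support x : translated_cutoff x = creal 0 \/ O x.
Proof.
  destruct (Rle_dec (Cre (Defs.sigma inv alpha g a x)) d) as [Hsmall | Hlarge].
  - left; unfold translated_cutoff; rewrite cutoff_small; auto.
  - right; apply translate_large; lra.
Qed.

End TranslatedCutoff.

Section Approximants.

Context {G X : Type} (mul : G -> G -> G) (e : G) (inv : G -> G)
  (opn : (X -> Prop) -> Prop) (alpha : G -> X -> X).
Hypothesis Hgrp : is_group mul e inv.
Hypothesis Hact : is_continuous_action mul e opn alpha.
Hypothesis Htop : is_topology opn.
Hypothesis Hcontr : forall K U : X -> Prop,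
  is_compact opn K -> opn U -> (exists x, U x) ->
  exists g : G, forall x, K x -> U (alpha g x).

Lemma supported_approximant (a : X -> Defs.C) (d : R) (P : X -> Prop) :
  in_C0_pos opn a -> 0 < d -> opn P -> (exists x, P x) ->
  (forall x, P x -> d < Cre (a x) \/ forall y, Cre (a y) <= d) ->
  exists (s : X -> Defs.C) (g : G), in_C0 opn s /\
    (forall x, Cmod (fsub (fmul (fmul (fstar s) a) s) (Defs.sigma inv alpha g a) x) <= d) /\
    (forall x, s x = creal 0 \/ P x).
Proof.
  intros Ha Hd HP HneP HPa.
  destruct (proj2 (proj1 Ha) d Hd) as [K [HK HKa]].
  destruct (Hcontr K P HK HP HneP) as [g Hg].
  exists (translated_cutoff inv alpha a d g), g; split; [| split].
  - eapply translated_cutoff_C0; eauto.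
  - intros x; eapply translated_cutoff_approx; eauto.
  - intros x; eapply translated_cutoff_support; eauto.
Qed.

End Approximants.

Theorem mainTheorem15
  (G : Type) (mul : G -> G -> G) (e : G) (inv : G -> G)
  (X : Type) (opn : (X -> Prop) -> Prop) (alpha : G -> X -> X)
  (Hgrp : is_group mul e inv)
  (Htop : is_topology opn)
  (Hhaus : hausdorff opn)
  (Hlc : locally_compact opn)
  (Hnc : ~ is_compact opn (fun _ : X => True))
  (H3 : more_than_two_points X)
  (Hact : is_continuous_action mul e opn alpha)
  (Hcontr : forall K U : X -> Prop,
      is_compact opn K -> opn U -> (exists x, U x) ->
      exists g : G, forall x, K x -> U (alpha g x)) :
  G_separating opn inv alpha.
Proof.
  intros a b c eps Ha Hb Hc Heps.
  pose (d := eps / 2); assert (Hd : 0 < d < eps) by (unfold d; lra).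
  assert (Hpt : exists x : X, True) by (destruct H3 as [x _]; eauto).
  destruct (superlevel_open opn Htop (fun x => Cre (a x)) d
              (rcont_Re opn a (proj1 (proj1 Ha))) Hpt) as [Oa [HOa [Hne_a HOa_large]]].
  destruct (superlevel_open opn Htop (fun x => Cre (b x)) d
              (rcont_Re opn b (proj1 (proj1 Hb))) Hpt) as [Ob [HOb [Hne_b HOb_large]]].
  destruct (disjoint_open_subsets mul e inv opn alpha Hgrp Hact Htop Hhaus H3 Hcontr
              Oa Ob HOa Hne_a HOb Hne_b)
    as [Pa [Pb [HPa [HPb [Hne_Pa [Hne_Pb [HPOa [HPOb Hdisj]]]]]]]].
  destruct (supported_approximant mul e inv opn alpha Hgrp Hact Htop Hcontr a d Pa)
    as [s [g [Hs [Hs_approx Hs_supp]]]]; auto; [lra |].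
  destruct (supported_approximant mul e inv opn alpha Hgrp Hact Htop Hcontr b d Pb)
    as [t [h [Ht [Ht_approx Ht_supp]]]]; auto; [lra |].
  exists s, t, g, h; split; [auto |]; split; [auto |].
  split; [apply (supnorm_lt_of_bound _ d); [lra | auto] |].
  split; [apply (supnorm_lt_of_bound _ d); [lra | auto] |].
  (* s and t have disjoint supports, so s^* c t = 0. *)
  apply (supnorm_lt_of_bound _ 0); [lra |]; intros x.
  unfold fmul, fstar; rewrite Cmod_sandwich_zero; [lra |].
  destruct (Hs_supp x) as [Hs0 | HPx]; auto.
  destruct (Ht_supp x) as [Ht0 | HPx']; auto.
  destruct (Hdisj x); auto.
Qed.
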